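(* Let $A:X\to Y$ be a bounded linear operator between Banach spaces, $1<p<\infty$, $C,\sigma>0$, and $G\subset B_Y$ with $\overline{\mathrm{co}}(G)=B_Y$. Suppose that for every $y\in G$ and every weakly null net $(x_\lambda)\subset\sigma B_X$, $\limsup_\lambda\|y+Ax_\lambda\|\le 1+C\sigma^p$. Then $\rho(\sigma,A)\le C\sigma^p$.
   Context: $\rho(\sigma,A)=\sup\{\limsup_\lambda\|y+Ax_\lambda\|-1 : y\in B_Y,\ (x_\lambda)\text{ a weakly null net in }\sigma B_X\}$. *)

From Stdlib Require Import Reals List.
Open Scope R_scope.
Set Implicit Arguments.

Record BanachSpace := {
  carrier :> Type;
  vzero : carrier;
  vadd : carrier -> carrier -> carrier;
  vopp : carrier -> carrier;
  vscal : R -> carrier -> carrier;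
  vnorm : carrier -> R;
  vadd_assoc : forall x y z, vadd x (vadd y z) = vadd (vadd x y) z;
  vadd_comm : forall x y, vadd x y = vadd y x;
  vadd_0 : forall x, vadd x vzero = x;
  vadd_opp : forall x, vadd x (vopp x) = vzero;
  vscal_1 : forall x, vscal 1 x = x;
  vscal_assoc : forall a b x, vscal a (vscal b x) = vscal (a * b) x;
  vscal_distr_l : forall a x y, vscal a (vadd x y) = vadd (vscal a x) (vscal a y);
  vscal_distr_r : forall a b x, vscal (a + b) x = vadd (vscal a x) (vscal b x);
  vnorm_eq0 : forall x, vnorm x = 0 -> x = vzero;
  vnorm_scal : forall a x, vnorm (vscal a x) = Rabs a * vnorm x;
  vnorm_triangle : forall x y, vnorm (vadd x y) <= vnorm x + vnorm y;
  vcomplete : forall u : nat -> carrier,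
    (forall eps, eps > 0 -> exists N, forall m n, (N <= m)%nat -> (N <= n)%nat ->
        vnorm (vadd (u m) (vopp (u n))) < eps) ->
    exists l, forall eps, eps > 0 -> exists N, forall n, (N <= n)%nat ->
        vnorm (vadd (u n) (vopp l)) < eps
}.

Arguments vzero {b0}.
Arguments vadd {b0}.
Arguments vopp {b0}.
Arguments vscal {b0}.
Arguments vnorm {b0}.

Definition bounded_linear (X Y : BanachSpace) (A : X -> Y) : Prop :=
  (forall x y, A (vadd x y) = vadd (A x) (A y)) /\
  (forall a x, A (vscal a x) = vscal a (A x)) /\
  (exists M, forall x, vnorm (A x) <= M * vnorm x).

Definition dual_elem (X : BanachSpace) (f : X -> R) : Prop :=
  (forall x y, f (vadd x y) = f x + f y) /\
  (forall a x, f (vscal a x) = a * f x) /\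
  (exists M, forall x, Rabs (f x) <= M * vnorm x).

Arguments dual_elem {X}.
Arguments bounded_linear {X Y}.

Record directed (I : Type) (le : I -> I -> Prop) : Prop := {
  dir_refl : forall i, le i i;
  dir_trans : forall i j k, le i j -> le j k -> le i k;
  dir_upper : forall i j, exists k, le i k /\ le j k;
  dir_inhabited : inhabited I
}.

Definition weakly_null (X : BanachSpace) (I : Type) (le : I -> I -> Prop) (x : I -> X) : Prop :=
  forall f : X -> R, dual_elem f ->
    forall eps, eps > 0 -> exists i0, forall i, le i0 i -> Rabs (f (x i)) < eps.

Arguments weakly_null {X I}.

Definition limsup_le (I : Type) (le : I -> I -> Prop) (a : I -> R) (c : R) : Prop :=
  forall eps, eps > 0 -> exists i0, forall i, le i0 i -> a i <= c + eps.

Arguments limsup_le {I}.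
Arguments directed {I}.

Definition convex_hull (Y : BanachSpace) (S : Y -> Prop) (y : Y) : Prop :=
  exists l : list (R * Y),
    Forall (fun q => 0 <= fst q /\ S (snd q)) l /\
    fold_right (fun q s => fst q + s) 0 l = 1 /\
    y = fold_right (fun q v => vadd (vscal (fst q) (snd q)) v) vzero l.

Arguments convex_hull {Y}.

Definition norm_closure (Y : BanachSpace) (S : Y -> Prop) (y : Y) : Prop :=
  forall eps, eps > 0 -> exists z, S z /\ vnorm (vadd y (vopp z)) < eps.

Arguments norm_closure {Y}.

Definition closed_convex_hull (Y : BanachSpace) (S : Y -> Prop) : Y -> Prop :=
  norm_closure (convex_hull S).

Arguments closed_convex_hull {Y}.

(** rho(sigma, A) <= r, where
    rho(sigma,A) = sup { limsup_i ||y + A x_i|| - 1 : y in B_Y,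
                          (x_i) weakly null net in sigma B_X }.
    (sup <= r iff every element is <= r.) *)
Definition rho_le (X Y : BanachSpace) (sigma : R) (A : X -> Y) (r : R) : Prop :=
  forall y : Y, vnorm y <= 1 ->
  forall (I : Type) (le : I -> I -> Prop) (x : I -> X),
    directed le -> weakly_null le x -> (forall i, vnorm (x i) <= sigma) ->
    limsup_le le (fun i => vnorm (vadd y (A (x i))) - 1) r.

Arguments rho_le {X Y}.

(* If eventually ||g + a_i|| <= c for every g in G, the same eventual bound holds for
   convex combinations of points of G (the norm is convex), and, up to any eps > 0, for
   norm limits of such combinations (the norm is 1-Lipschitz).  Hence limsup ||y + a_i||
   is controlled on the closed convex hull of G, which is B_Y. *)
From Stdlib Require Import Reals Lra List.
Open Scope R_scope.

Lemma vscal0 {Y : BanachSpace} (v : Y) : vscal 0 v = vzero.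
Proof. apply vnorm_eq0. rewrite vnorm_scal, Rabs_R0. ring. Qed.

Lemma vnorm0 {Y : BanachSpace} : vnorm (@vzero Y) = 0.
Proof. rewrite <- (vscal0 vzero), vnorm_scal, Rabs_R0. ring. Qed.

Lemma vadd_subK {Y : BanachSpace} (y z w : Y) :
  vadd y w = vadd (vadd y (vopp z)) (vadd z w).
Proof.
  rewrite vadd_assoc, <- (vadd_assoc _ y (vopp z) z), (vadd_comm _ (vopp z) z),
    vadd_opp, vadd_0.
  reflexivity.
Qed.

Lemma vadd_scal_cons {Y : BanachSpace} (t s : R) (g z w : Y) :
  vadd (vadd (vscal t g) z) (vscal (t + s) w) =
  vadd (vscal t (vadd g w)) (vadd z (vscal s w)).
Proof.
  rewrite vscal_distr_r, vscal_distr_l, <- !vadd_assoc.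
  f_equal.
  rewrite (vadd_comm _ z), <- vadd_assoc.
  f_equal.
  apply vadd_comm.
Qed.

Definition weight_sum {Y : BanachSpace} (l : list (R * Y)) : R :=
  fold_right (fun q s => fst q + s) 0 l.

Definition combination {Y : BanachSpace} (l : list (R * Y)) : Y :=
  fold_right (fun q v => vadd (vscal (fst q) (snd q)) v) vzero l.

Section EventualNormBounds.

Variables (Y : BanachSpace) (I : Type) (le : I -> I -> Prop) (a : I -> Y).
Hypothesis le_directed : directed le.

Definition eventually (P : I -> Prop) : Prop := exists i0, forall i, le i0 i -> P i.

Lemma eventually_forall (P : I -> Prop) : (forall i, P i) -> eventually P.
Proof. destruct (dir_inhabited le_directed) as [i0]. exists i0. auto. Qed.

Lemma eventually_and {P Q : I -> Prop} :
  eventually P -> eventually Q -> eventually (fun i => P i /\ Q i).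
Proof.
  intros [i1 HP] [i2 HQ].
  destruct (dir_upper le_directed i1 i2) as [k [Hk1 Hk2]].
  exists k. intros i Hi.
  split; [apply HP | apply HQ]; eapply dir_trans; eauto.
Qed.

Lemma eventually_norm_combination {G : Y -> Prop} {c : R} :
  (forall g, G g -> eventually (fun i => vnorm (vadd g (a i)) <= c)) ->
  forall l, Forall (fun q => 0 <= fst q /\ G (snd q)) l ->
  eventually (fun i =>
    vnorm (vadd (combination l) (vscal (weight_sum l) (a i))) <= weight_sum l * c).
Proof.
  intros HG l. induction l as [|[t g] l IH]; intros Hl.
  - apply eventually_forall. intros i. simpl.
    rewrite vscal0, vadd_0, vnorm0. lra.
  - inversion Hl as [|? ? [Ht Hg] Hl']; subst. simpl in Ht, Hg.
    destruct (eventually_and (HG g Hg) (IH Hl')) as [i0 H0].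
    exists i0. intros i Hi. destruct (H0 i Hi) as [Hgi Hli].
    simpl. rewrite vadd_scal_cons.
    eapply Rle_trans; [apply vnorm_triangle |].
    rewrite vnorm_scal, Rabs_pos_eq by exact Ht.
    assert (t * vnorm (vadd g (a i)) <= t * c) by (apply Rmult_le_compat_l; lra).
    lra.
Qed.

Lemma limsup_norm_convex_hull {G : Y -> Prop} {c : R} :
  (forall g, G g -> limsup_le le (fun i => vnorm (vadd g (a i))) c) ->
  forall y, convex_hull G y -> limsup_le le (fun i => vnorm (vadd y (a i))) c.
Proof.
  intros HG y [l [Hl [Hsum ->]]] eps Heps.
  destruct (eventually_norm_combination (c := c + eps) (fun g Hg => HG g Hg eps Heps) _ Hl)
    as [i0 H0].
  exists i0. intros i Hi.
  specialize (H0 i Hi). unfold weight_sum, combination in H0. rewrite Hsum, vscal_1 in H0. lra.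
Qed.

Lemma limsup_norm_closure {S : Y -> Prop} {c : R} :
  (forall z, S z -> limsup_le le (fun i => vnorm (vadd z (a i))) c) ->
  forall y, norm_closure S y -> limsup_le le (fun i => vnorm (vadd y (a i))) c.
Proof.
  intros HS y Hy eps Heps.
  destruct (Hy (eps / 2) ltac:(lra)) as [z [Hz Hyz]].
  destruct (HS z Hz (eps / 2) ltac:(lra)) as [i0 H0].
  exists i0. intros i Hi.
  rewrite (vadd_subK y z).
  pose proof (vnorm_triangle _ (vadd y (vopp z)) (vadd z (a i))).
  specialize (H0 i Hi). lra.
Qed.

Lemma limsup_norm_closed_convex_hull {G : Y -> Prop} {c : R} :
  (forall g, G g -> limsup_le le (fun i => vnorm (vadd g (a i))) c) ->
  forall y, closed_convex_hull G y -> limsup_le le (fun i => vnorm (vadd y (a i))) c.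
Proof.
  intros HG. apply limsup_norm_closure. exact (limsup_norm_convex_hull HG).
Qed.

End EventualNormBounds.

Lemma limsup_le_sub (I : Type) (le : I -> I -> Prop) (f : I -> R) (b c : R) :
  limsup_le le f (b + c) -> limsup_le le (fun i => f i - b) c.
Proof.
  intros Hf eps Heps. destruct (Hf eps Heps) as [i0 H0].
  exists i0. intros i Hi. specialize (H0 i Hi). lra.
Qed.

Theorem proposition2p2 (X Y : BanachSpace) (A : X -> Y) (p C sigma : R) (G : Y -> Prop) :
  bounded_linear A ->
  1 < p -> C > 0 -> sigma > 0 ->
  (forall y, G y -> vnorm y <= 1) ->
  (forall y, closed_convex_hull G y <-> vnorm y <= 1) ->
  (forall y, G y ->
     forall (I : Type) (le : I -> I -> Prop) (x : I -> X),
       directed le -> weakly_null le x -> (forall i, vnorm (x i) <= sigma) ->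
       limsup_le le (fun i => vnorm (vadd y (A (x i)))) (1 + C * Rpower sigma p)) ->
  rho_le sigma A (C * Rpower sigma p).
Proof.
  intros _ _ _ _ _ hull_ball HG y Hy I le x Hd Hw Hx.
  apply limsup_le_sub.
  apply (@limsup_norm_closed_convex_hull Y I le (fun i => A (x i)) Hd G).
  - intros g Hg. exact (HG g Hg I le x Hd Hw Hx).
  - exact (proj2 (hull_ball y) Hy).
Qed.
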